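(* Let $n\ge3$, $k\ge0$, let $R$ be a maximal reversible set in $G_n^k$, and let $x_1,x_2,\dots,x_{k+1}$ be a consistent labeling of $A(R)$. Then for each $i\in\{1,\dots,k+1\}$, $|B(x_i,R)|\le k+2-i$.
   Context: For integers $n\ge3$, $k\ge0$, the crown $S_n^k$ is the poset with ground set $A\cup B$, $A=\{a_1,\dots,a_{n+k}\}$, $B=\{b_1,\dots,b_{n+k}\}$, indices cyclic modulo $n+k$; elements of $A$ are pairwise incomparable, as are elements of $B$, and $a_i$ is incomparable to $b_j$ when $j\in\{i,\dots,i+k\}$ (mod $n+k$), while $a_i<b_j$ otherwise. $\mathrm{Inc}(A,B)$ is the set of pairs $(a,b)\in A\times B$ with $a$ incomparable to $b$; $G_n^k$ has vertex set $\mathrm{Inc}(A,B)$, with $(a,b)$ adjacent to $(x,y)$ iff $a<y$ and $x<b$. A set $R\subseteq\mathrm{Inc}(A,B)$ is reversible if some linear extension $L$ of $S_n^k$ has $b<a$ in $L$ for all $(a,b)\in R$; maximal reversible means maximal under inclusion among reversible sets. For $R\subseteq\mathrm{Inc}(A,B)$ and $a\in A$, $B(a,R)=\{b\in B:(a,b)\in R\}$, and $A(R)=\{a\in A: B(a,R)\ne\emptyset\}$. For a maximal reversible set $R$ one has $|A(R)|=k+1$, and the sets $B(a,R)$, $a\in A(R)$, form a chain under inclusion. A consistent labeling of $A(R)$ is a labeling $A(R)=\{x_1,\dots,x_{k+1}\}$ such that $B(x_\beta,R)\subseteq B(x_\alpha,R)$ whenever $\alpha<\beta$. *)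

From mathcomp Require Import all_boot all_order.
Set Implicit Arguments. Unset Strict Implicit. Unset Printing Implicit Defensive.

(* Crown S_n^k with N := n + k.  Ground set: A + B, where inl i = a_i and
   inr j = b_j, indices in 'I_(n+k) (cyclic, 0-based). *)

Section Crown.
Variables n k : nat.
Local Notation N := (n + k).

(* a_i is incomparable to b_j iff j in {i, ..., i+k} (mod N),
   i.e. (j - i) mod N <= k. *)
Definition crown_inc (i j : 'I_N) : bool := ((j + N - i) %% N <= k).

Definition crown_ground := ('I_N + 'I_N)%type.

Definition crown_lt (x y : crown_ground) : bool :=
  match x, y with
  | inl i, inr j => ~~ crown_inc i j
  | _, _ => false
  end.

(* A linear extension, represented by an injective position function:
   x precedes y in L iff pos x < pos y. *)
Definition linear_extension (pos : crown_ground -> nat) : Prop :=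
  injective pos /\ forall x y, crown_lt x y -> pos x < pos y.

(* Inc(A,B) = vertex set of G_n^k, pairs (a_i, b_j) encoded as (i, j). *)
Definition Inc : {set 'I_N * 'I_N} := [set p | crown_inc p.1 p.2].

Definition reversible (R : {set 'I_N * 'I_N}) : Prop :=
  R \subset Inc /\
  exists pos, linear_extension pos /\
    forall p, p \in R -> pos (inr p.2) < pos (inl p.1).

Definition maximal_reversible (R : {set 'I_N * 'I_N}) : Prop :=
  reversible R /\ forall R', reversible R' -> R \subset R' -> R' = R.

Definition Bset (a : 'I_N) (R : {set 'I_N * 'I_N}) : {set 'I_N} :=
  [set b | (a, b) \in R].

Definition Aset (R : {set 'I_N * 'I_N}) : {set 'I_N} :=
  [set a | Bset a R != set0].

(* consistent labeling x_1..x_{k+1} of A(R), 0-based: x : 'I_(k+1) -> 'I_N *)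
Definition consistent_labeling (R : {set 'I_N * 'I_N}) (x : 'I_k.+1 -> 'I_N) : Prop :=
  injective x /\ (forall a, a \in Aset R <-> exists i, x i = a) /\
  forall al be : 'I_k.+1, al < be -> Bset (x be) R \subset Bset (x al) R.

End Crown.

From mathcomp Require Import all_boot all_order.
From mathcomp Require Import zify.
Set Implicit Arguments. Unset Strict Implicit.

(* Every [b] in [S := B(x_i, R)] is
   incomparable to each of [x_1, ..., x_i], i.e. [b - x_j] lies in
   [{0, ..., k}] modulo [N := n + k].  Hence [T := {x_1, ..., x_i}] avoids the
   sumset [S + {1, ..., N - k - 1}].  In [Z/N], adding an interval of [m]
   consecutive residues to a nonempty set either covers [Z/N] or enlarges it
   by at least [m - 1] elements, so [|S| + |T| <= k + 2]. *)

Section CyclicIntervalSumset.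
Variable N : nat.
Implicit Types (S T Y : {set 'I_N}) (y : 'I_N).

Lemma val_iter_ordS y j : val (iter j (@ordS N) y) = (y + j) %% N.
Proof.
elim: j => [|j IHj] /=; first by rewrite addn0 modn_small.
by rewrite IHj addnS -addn1 modnDml addn1.
Qed.

Lemma ordS_closed_setT Y : Y != set0 -> @ordS N @: Y \subset Y -> Y = setT.
Proof.
case/set0Pn=> y0 Yy0 ordS_Y; apply/setP=> y; rewrite inE.
have iter_in j : iter j (@ordS N) y0 \in Y.
  by elim: j => [|j IHj] //=; apply: (subsetP ordS_Y); exact: imset_f.
have -> : y = iter (y + N - y0) (@ordS N) y0.
  apply: val_inj; rewrite val_iter_ordS.
  have := ltn_ord y0; have := ltn_ord y => lt_y lt_y0.
  have -> : y0 + (y + N - y0) = y + N by lia.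
  by rewrite modnDr modn_small.
exact: iter_in.
Qed.

Fixpoint interval_sumset S j : {set 'I_N} :=
  if j is j'.+1 then interval_sumset S j' :|: @ordS N @: interval_sumset S j'
  else S.

Lemma mem_interval_sumset S j y : y \in interval_sumset S j ->
  exists2 b, b \in S & exists2 d, d <= j & val y = (b + d) %% N.
Proof.
elim: j y => [|j IHj] y /=.
  by move=> Sy; exists y => //; exists 0; rewrite ?addn0 ?modn_small.
case/setUP => [/IHj [b Sb [d le_dj ->]]|/imsetP [z /IHj [b Sb [d le_dj Ez]] ->]].
  by exists b => //; exists d => //; apply: leqW.
exists b => //; exists d.+1 => //=.
by rewrite Ez addnS -addn1 modnDml addn1.
Qed.

Lemma subset_interval_sumset S j : S \subset interval_sumset S j.
Proof. by elim: j => [|j IHj] //=; apply: subset_trans IHj (subsetUl _ _). Qed.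

Lemma card_interval_sumset S j : S != set0 ->
  interval_sumset S j = setT \/ #|S| + j <= #|interval_sumset S j|.
Proof.
move=> S_n0; elim: j => [|j IHj]; first by right; rewrite addn0.
have sumset_n0 : interval_sumset S j != set0.
  case/set0Pn: S_n0 => s Ss; apply/set0Pn; exists s.
  exact: subsetP (subset_interval_sumset S j) s Ss.
have [ordS_closed|ordS_escapes] :=
  boolP (@ordS N @: interval_sumset S j \subset interval_sumset S j).
  by left; rewrite /= (ordS_closed_setT sumset_n0 ordS_closed) setTU.
right; case: IHj => [sumsetT|IHj].
  by move: ordS_escapes; rewrite sumsetT subsetT.
have grows : #|interval_sumset S j| < #|interval_sumset S j.+1|.
  exact: proper_card (properUl ordS_escapes).
lia.
Qed.

Lemma cyclic_diff_shift b e : b < N -> 0 < e < N ->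
  (b + N - (b + e) %% N) %% N = N - e.
Proof.
move=> lt_bN /andP [e_gt0 lt_eN].
have [lt_beN|le_Nbe] := ltnP (b + e) N.
  by rewrite (modn_small lt_beN) (_ : b + N - (b + e) = N - e) ?modn_small; lia.
rewrite (_ : b + e = (b + e - N) + N); last by lia.
rewrite modnDr (@modn_small (b + e - N)); last by lia.
by rewrite (_ : b + N - (b + e - N) = (N - e) + N) ?modnDr ?modn_small; lia.
Qed.

Lemma card_cyclic_diff_bounded k S T : k.+2 <= N -> S != set0 -> T != set0 ->
  {in T & S, forall a b : 'I_N, (b + N - a) %% N <= k} -> #|S| + #|T| <= k.+2.
Proof.
move=> le_kN S_n0 T_n0 diffST.
set j := N - k.+2; set Y := @ordS N @: interval_sumset S j.
have T_avoids_Y : T \subset ~: Y.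
  apply/subsetP=> t Tt; rewrite inE; apply/imsetP => -[y /mem_interval_sumset].
  case=> b Sb [d le_dj Ey] Et.
  have := diffST t b Tt Sb; rewrite Et /= Ey -addn1 modnDml -addnA addn1.
  rewrite cyclic_diff_shift ?ltn_ord //; rewrite /j in le_dj; lia.
have cardY : #|Y| = #|interval_sumset S j| by rewrite card_imset //; apply: ordS_inj.
have cardT_le : #|Y| + #|T| <= N.
  by rewrite -[X in _ <= X]card_ord -(cardsC Y) leq_add2l subset_leq_card.
have T_gt0 : 0 < #|T| by rewrite card_gt0.
move: cardT_le; rewrite cardY.
case: (card_interval_sumset j S_n0) => [->|]; rewrite ?cardsT ?card_ord /j; lia.
Qed.

End CyclicIntervalSumset.

Lemma crown_inc_chain n k (R : {set 'I_(n + k) * 'I_(n + k)})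
    (x : 'I_k.+1 -> 'I_(n + k)) (j i : 'I_k.+1) (b : 'I_(n + k)) :
  R \subset Inc n k ->
  (forall al be : 'I_k.+1, al < be -> Bset (x be) R \subset Bset (x al) R) ->
  j <= i -> b \in Bset (x i) R -> crown_inc (x j) b.
Proof.
move=> R_Inc x_chain le_ji Bb.
have Rjb : (x j, b) \in R.
  move: le_ji; rewrite leq_eqVlt => /orP [/eqP/val_inj ->|lt_ji].
    by move: Bb; rewrite inE.
  by move: (subsetP (x_chain _ _ lt_ji) b Bb); rewrite inE.
by move: (subsetP R_Inc _ Rjb); rewrite inE.
Qed.

(* label i : 'I_(k+1) is the paper's index i+1, so |B(x_{i+1},R)| <= k+2-(i+1) *)
Theorem proposition3p1 (n k : nat) (hn : 3 <= n)
  (R : {set 'I_(n + k) * 'I_(n + k)}) (x : 'I_k.+1 -> 'I_(n + k)) :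
  maximal_reversible R -> consistent_labeling R x ->
  forall i : 'I_k.+1, #|Bset (x i) R| <= k + 2 - i.+1.
Proof.
move=> [[R_Inc _] _] [x_inj [_ x_chain]] i.
have [->|B_n0] := eqVneq (Bset (x i) R) set0; first by rewrite cards0.
have le_ik : i.+1 <= k.+1 := ltn_ord i.
pose T := [set x (widen_ord le_ik j) | j : 'I_i.+1].
have cardT : #|T| = i.+1.
  by rewrite card_imset ?card_ord // => j1 j2 /x_inj [] /val_inj.
have T_n0 : T != set0 by apply/set0Pn; exists (x (widen_ord le_ik ord0)); apply: imset_f.
have le_kN : k.+2 <= n + k by lia.
have diff_bounded :
    {in T & Bset (x i) R, forall a b : 'I_(n + k), (b + (n + k) - a) %% (n + k) <= k}.
  move=> _ b /imsetP [j _ ->] Bb.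
  exact: (crown_inc_chain R_Inc x_chain (j := widen_ord le_ik j) (ltn_ord j) Bb).
have := card_cyclic_diff_bounded le_kN B_n0 T_n0 diff_bounded.
rewrite cardT; lia.
Qed.
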